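(* Consider the following slotted system without diversity. There are $N\ge 2$ users and time slots $t=1,\dots,T$. In each slot a base station (BS) schedules exactly one user, using the uniform randomized algorithm: in every slot, independently of everything else, each user is scheduled with probability $\frac1N$. An adversary chooses a blocking matrix $\sigma=(\sigma_i(t))\in\{0,1\}^{N\times T}$, where $\sigma_i(t)=0$ means that the channel to user $i$ is blocked in slot $t$. The matrix $\sigma$ is feasible if $\sum_{i=1}^N\sum_{t=1}^T(1-\sigma_i(t))\le \alpha T$ and $\sum_{i=1}^N(1-\sigma_i(t))\le 1$ for every $t$, where $0<\alpha<1$ and $\alpha T$ is an integer. The ages satisfy $a_i(1)=1$; if user $i$ is scheduled in slot $t$ and $\sigma_i(t)=1$ then $a_i(t+1)=1$, and otherwise $a_i(t+1)=a_i(t)+1$. The average age is $\Delta^{\sigma}=\frac1T\sum_{t=1}^T\frac1N\sum_{i=1}^N\mathbb{E}[a_i(t)]$. Then there exists a feasible blocking matrix maximizing $\Delta^{\sigma}$ over all feasible $\sigma$ whose blocked slots all belong to a single user and form a set of consecutive time slots. Moreover, the blocked user may be chosen arbitrarily.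
   Context: The expectation is over the random scheduling choices of the BS. The adversary's matrix $\sigma$ is fixed (deterministic). *)

From HB Require Import structures.
From mathcomp Require Import all_boot all_order all_algebra.
Set Implicit Arguments. Unset Strict Implicit. Unset Printing Implicit Defensive.
Import Order.TTheory GRing.Theory Num.Theory.
Local Open Scope ring_scope.

(* Slots are 0-indexed: slot t : 'I_T corresponds to the paper's slot t+1.
   A blocking matrix sigma : 'M[bool]_(N,T); sigma i t = true means
   sigma_i(t+1) = 1 (not blocked), false means blocked.
   A schedule u : {ffun 'I_T -> 'I_N} gives the user scheduled in each slot. *)

(* age u sigma i k = a_i(k+1) (paper's indexing), for k <= T. *)
Fixpoint age (N T : nat) (u : {ffun 'I_T -> 'I_N}) (sigma : 'M[bool]_(N, T))
  (i : 'I_N) (k : nat) : nat :=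
  match k with
  | 0 => 1
  | k'.+1 =>
    match @insub nat (fun n => n < T)%N 'I_T k' with
    | Some t => if (u t == i) && sigma i t then 1 else (age u sigma i k').+1
    | None => (age u sigma i k').+1
    end
  end.

(* E[a_i(t+1)]: expectation over the uniform random schedule, where every
   slot independently schedules each user with probability 1/N, i.e. each
   schedule u has probability (1/N)^T. *)
Definition exp_age (N T : nat) (sigma : 'M[bool]_(N, T)) (i : 'I_N) (t : 'I_T) : rat :=
  \sum_(u : {ffun 'I_T -> 'I_N}) (N%:R^-1) ^+ T * (age u sigma i t)%:R.

Definition avg_age (N T : nat) (sigma : 'M[bool]_(N, T)) : rat :=
  T%:R^-1 * \sum_(t < T) (N%:R^-1 * \sum_(i < N) exp_age sigma i t).

Definition feasible (N T : nat) (alpha : rat) (sigma : 'M[bool]_(N, T)) : Prop :=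
  ((\sum_(i < N) \sum_(t < T) (~~ sigma i t : nat))%:R <= alpha * T%:R)
  /\ (forall t : 'I_T, (\sum_(i < N) (~~ sigma i t : nat) <= 1)%N).

From mathcomp Require Import all_boot all_order all_algebra.
From mathcomp Require Import zify ring lra.
Set Implicit Arguments. Unset Strict Implicit. Unset Printing Implicit Defensive.
Import Order.TTheory GRing.Theory Num.Theory.
Local Open Scope ring_scope.

(* Averaging over the uniform schedule, the expected age of user i at slot t is
   sum_(a <= t) p ^ (number of unblocked slots of row i in [a, t)), p = 1 - 1/N,
   so N T Delta is the sum over the rows of a potential [total_age p T].  Since
   x |-> p ^ x is supermodular, two rows whose blocked slots are disjoint may be
   replaced by an unblocked row and their intersection without decreasing the
   potential, so every blocked slot can be moved to the single user j.  For a
   row on the slots 0, ..., n, twice the potential is n + 1 plus the sum over all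
   pairs of slots of p ^ |rank a - rank b|, where the rank of a slot counts the unblocked slots
   before it.  The unblocked slots realise every rank once and each blocked slot
   repeats the rank of its predecessor; the pair sum is largest when all blocked
   slots repeat one rank maximising sum_j p ^ |j - r|, i.e. when they form an
   interval.  Finitely many intervals remain, and the best one is optimal. *)

Lemma sum_sym_triangle (R : comNzRingType) (f : nat -> nat -> R) n :
  (forall a b, f a b = f b a) ->
  \sum_(a < n) \sum_(b < n) f a b + \sum_(a < n) f a a
    = (\sum_(a < n) \sum_(b < a.+1) f a b) *+ 2.
Proof.
move=> fC; elim: n => [|n IH]; first by rewrite !big_ord0.
rewrite (big_ord_recr n (fun a : 'I_n.+1 => \sum_(b < a.+1) f a b)) /=.
rewrite mulrnDl -IH !big_ord_recr /=.
under eq_bigr do rewrite big_ord_recr.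
rewrite big_split /=.
under [\sum_(i < n) f i n]eq_bigr do rewrite fC.
ring.
Qed.

Lemma sum_sym_split (V : comNzRingType) (I : finType) (P : pred I) (h : I -> I -> V) :
  (forall a b, h a b = h b a) ->
  \sum_a \sum_b h a b = \sum_(a | P a) \sum_(b | P b) h a b
    + (\sum_(a | ~~ P a) \sum_(b | P b) h a b) *+ 2
    + \sum_(a | ~~ P a) \sum_(b | ~~ P b) h a b.
Proof.
move=> hC; rewrite (bigID P) /=.
under eq_bigr do rewrite (bigID P) /=.
under [X in _ + X]eq_bigr do rewrite (bigID P) /=.
rewrite !big_split /= [\sum_(a | P a) \sum_(b | ~~ P b) _]exchange_big /=.
under [\sum_(b | ~~ P b) \sum_(a | P a) _]eq_bigr do under eq_bigr do rewrite hC.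
ring.
Qed.

Lemma sum_negb_le1_orb (I : finType) (f : I -> bool) x y : x != y ->
  (\sum_i ~~ f i <= 1)%N -> f x || f y.
Proof.
move=> x_y; rewrite (bigD1 x) // (bigD1 y) 1?eq_sym //=.
by case: (f x); case: (f y).
Qed.

Definition nopen (w : nat -> bool) (a t : nat) : nat := (\sum_(a <= s < t) w s)%N.

Implicit Types w : nat -> bool.

Lemma nopen_split (w f g : nat -> bool) a t :
  (forall s, (a <= s < t)%N -> w s = f s + g s :> nat)%N ->
  nopen w a t = (nopen f a t + nopen g a t)%N.
Proof. by move=> wE; rewrite /nopen -big_split; apply: eq_big_nat. Qed.

Lemma nopen_predC w a t :
  (nopen w a t + nopen (fun s => ~~ w s) a t)%N = (t - a)%N.
Proof.
rewrite -[(t - a)%N]muln1 -sum_nat_const_nat /nopen -big_split /=.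
by apply: eq_bigr => s _; case: (w s).
Qed.

Lemma nopen_cat w a b t : (a <= b <= t)%N ->
  nopen w a t = (nopen w a b + nopen w b t)%N.
Proof. by move=> /andP[ab bt]; rewrite /nopen (big_cat_nat ab bt). Qed.

Lemma nopen_all w a t : (forall s, (a <= s < t)%N -> w s) -> nopen w a t = (t - a)%N.
Proof.
move=> wT; rewrite -[(t - a)%N]muln1 -sum_nat_const_nat.
by apply: eq_big_nat => s /wT ->.
Qed.

Lemma nopen_none w a t : (forall s, (a <= s < t)%N -> ~~ w s) -> nopen w a t = 0%N.
Proof.
move=> wF; have := nopen_predC w a t.
by rewrite [nopen (fun s => ~~ w s) a t]nopen_all //; lia.
Qed.

Lemma nopen_not_all (ws : seq (nat -> bool)) a t :
  (nopen (fun s => ~~ all (fun w => w s) ws) a t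
    <= \sum_(w <- ws) nopen (fun s => ~~ w s) a t)%N.
Proof.
rewrite /nopen exchange_big /=; apply: leq_sum => s _.
by elim: ws => [|w ws IH] //=; rewrite big_cons negb_and; case: (w s) => /=; lia.
Qed.

Definition window (a b s : nat) : bool := (a <= s < b)%N.

Lemma nopen_windowI w a t n : (a <= t)%N -> (t <= n)%N ->
  nopen (fun s => window a t s && w s) 0 n = nopen w a t.
Proof.
move=> a_t t_n; rewrite (@nopen_cat _ 0 t) ?t_n // (@nopen_cat _ 0 a) ?a_t //.
have before : nopen (fun s => window a t s && w s) 0 a = 0%N.
  by apply: nopen_none => s /andP[_ sa]; rewrite /window leqNgt sa.
have after : nopen (fun s => window a t s && w s) t n = 0%N.
  by apply: nopen_none => s /andP[ts _]; rewrite /window ltnNge ts andbF.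
rewrite before after add0n addn0; apply: eq_big_nat => s a_s_t.
by rewrite /window a_s_t.
Qed.

Lemma nopen_window a b n : (a <= b)%N -> (b <= n)%N -> nopen (window a b) 0 n = (b - a)%N.
Proof.
move=> a_b b_n; rewrite -(nopen_all (w := xpredT)) // -(nopen_windowI _ a_b b_n).
by apply: eq_bigr => s _; rewrite andbT.
Qed.

Definition rank (w : nat -> bool) (c : nat) : nat := nopen w 0 c.

(* Slot [c] is the first one carrying the value [rank w c]. *)
Definition fresh (w : nat -> bool) (c : nat) : bool := (c == 0)%N || w c.-1.

Lemma rank_leq w c : (rank w c <= c)%N.
Proof. by have := nopen_predC w 0 c; rewrite subn0 /rank; lia. Qed.

Lemma rank0 w : rank w 0 = 0%N.
Proof. by rewrite /rank /nopen big_geq. Qed.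

Lemma rankS w c : rank w c.+1 = (rank w c + w c)%N.
Proof. by rewrite /rank /nopen big_nat_recr. Qed.

Lemma nopen_rank w a t : (a <= t)%N -> nopen w a t = (rank w t - rank w a)%N.
Proof. by move=> at_; rewrite /rank (@nopen_cat _ 0 a t) ?at_ // addKn. Qed.

Lemma leq_rank w a b : (a <= b)%N -> (rank w a <= rank w b)%N.
Proof. by move=> ab; rewrite /rank (@nopen_cat _ 0 a b) ?ab // leq_addr. Qed.

Lemma big_fresh_rank (V : Type) (idx : V) (op : Monoid.com_law idx) w n (F : nat -> V) :
  \big[op/idx]_(c < n.+1 | fresh w c) F (rank w c) = \big[op/idx]_(j < (rank w n).+1) F j.
Proof.
elim: n => [|n IH]; first by rewrite big_mkcond big_ord1 /= rank0 big_ord1.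
rewrite big_mkcond big_ord_recr /= -big_mkcond IH /fresh /= rankS.
by case: (w n); rewrite ?addn1 ?addn0 ?Monoid.mulm1 // [RHS]big_ord_recr.
Qed.

Lemma card_stale w n : #|[pred c : 'I_n.+1 | ~~ fresh w c]| = (n - rank w n)%N.
Proof.
have := cardC [pred c : 'I_n.+1 | fresh w c]; rewrite card_ord.
have -> : #|[pred c : 'I_n.+1 | fresh w c]| = (rank w n).+1.
  by rewrite -sum1_card (big_fresh_rank _ w n (fun _ => 1%N)) sum1_card card_ord.
have -> : #|[pred c : 'I_n.+1 | ~~ fresh w c]| = #|[predC [pred c : 'I_n.+1 | fresh w c]]|.
  exact: eq_card.
lia.
Qed.

Lemma rank_window_compl rho k c : (rho <= c <= rho + k)%N ->
  rank (fun s => ~~ window rho (rho + k) s) c = rho.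
Proof.
move=> /andP[rho_c c_k]; rewrite /rank (@nopen_cat _ 0 rho) ?rho_c //.
rewrite nopen_all => [|s /andP[_ s_rho]]; last by rewrite /window leqNgt s_rho.
rewrite nopen_none ?subn0 ?addn0 // => s /andP[rho_s s_c].
by rewrite negbK /window rho_s (leq_trans s_c).
Qed.

Section TotalAge.
Variables (R : realDomainType) (p : R).
Hypotheses (p_ge0 : 0 <= p) (p_le1 : p <= 1).

Definition total_age (T : nat) (w : nat -> bool) : R :=
  \sum_(t < T) \sum_(a < t.+1) p ^+ nopen w a t.

Lemma eq_total_age T w1 w2 :
  (forall s, (s < T)%N -> w1 s = w2 s) -> total_age T w1 = total_age T w2.
Proof.
move=> w12; apply: eq_bigr => t _; apply: eq_bigr => a _.
congr (_ ^+ _); apply: eq_big_nat => s /andP[_ st].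
by rewrite w12 // (ltn_trans st).
Qed.

Lemma expr_supermodular e d1 d2 :
  p ^+ (e + d1) + p ^+ (e + d2) <= p ^+ (e + d1 + d2) + p ^+ e.
Proof.
rewrite -addnA !exprD.
have q1 : 0 <= 1 - p ^+ d1 by rewrite subr_ge0 exprn_ile1.
have q2 : 0 <= 1 - p ^+ d2 by rewrite subr_ge0 exprn_ile1.
have := mulr_ge0 (exprn_ge0 e p_ge0) (mulr_ge0 q1 q2).
nra.
Qed.

Lemma total_age_supermodular T w1 w2 :
  (forall s, (s < T)%N -> w1 s || w2 s) ->
  total_age T w1 + total_age T w2
    <= total_age T xpredT + total_age T (fun s => w1 s && w2 s).
Proof.
move=> w12; rewrite -!big_split /=; apply: ler_sum => t _.
rewrite -!big_split /=; apply: ler_sum => a _.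
set e := nopen (fun s => w1 s && w2 s) a t.
set d1 := nopen (fun s => w1 s && ~~ w2 s) a t.
set d2 := nopen (fun s => ~~ w1 s && w2 s) a t.
have -> : nopen xpredT a t = (nopen w1 a t + d2)%N.
  apply: nopen_split => s /andP[_ st]; have := w12 s (ltn_trans st (ltn_ord t)).
  by case: (w1 s); case: (w2 s).
have -> : nopen w1 a t = (e + d1)%N.
  by apply: nopen_split => s _; case: (w1 s); case: (w2 s).
have -> : nopen w2 a t = (e + d2)%N.
  by apply: nopen_split => s _; case: (w1 s); case: (w2 s).
exact: expr_supermodular.
Qed.

Lemma total_age_merge T (ws : seq (nat -> bool)) :
  pairwise (fun w1 w2 : nat -> bool => [forall s : 'I_T, w1 s || w2 s]) ws ->
  \sum_(w <- ws) total_age T w + total_age T xpredT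
    <= (size ws)%:R * total_age T xpredT + total_age T (fun s => all (fun w => w s) ws).
Proof.
elim: ws => [|w ws IH] /=; first by rewrite big_nil add0r mul0r add0r.
move=> /andP[w_ws /IH {}IH].
have cover s : (s < T)%N -> w s || all (fun w' => w' s) ws.
  move=> sT; case ws_: (w s) => //=; apply: sub_all w_ws => w' /forallP.
  by move=> /(_ (Ordinal sT)) /=; rewrite ws_.
have := total_age_supermodular cover.
rewrite big_cons -natr1 mulrDl mul1r; lra.
Qed.

Definition rank_gram n w : R :=
  \sum_(a < n.+1) \sum_(b < n.+1) p ^+ `|rank w a - rank w b|.

Definition ladder (m r : nat) : R := \sum_(j < m.+1) p ^+ `|j - r|.

Lemma total_age_rank_gram n w : total_age n.+1 w *+ 2 = rank_gram n w + n.+1%:R.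
Proof.
have -> : total_age n.+1 w = \sum_(t < n.+1) \sum_(a < t.+1) p ^+ `|rank w t - rank w a|.
  apply: eq_bigr => t _; apply: eq_bigr => a _.
  have at_ : (a <= t)%N by rewrite -ltnS.
  by rewrite nopen_rank // distnEl // leq_rank.
rewrite -(@sum_sym_triangle _ (fun a b => p ^+ `|rank w a - rank w b|)) => [|a b]; last first.
  by rewrite distnC.
congr (_ + _); under eq_bigr do rewrite distnn expr0.
by rewrite sumr_const card_ord.
Qed.

Lemma rank_gram_split n w : let m := rank w n in
  rank_gram n w = \sum_(j < m.+1) ladder m j
    + (\sum_(c < n.+1 | ~~ fresh w c) ladder m (rank w c)) *+ 2
    + \sum_(a < n.+1 | ~~ fresh w a) \sum_(b < n.+1 | ~~ fresh w b)
        p ^+ `|rank w a - rank w b|.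
Proof.
move=> m; rewrite /rank_gram (sum_sym_split (fun c : 'I_n.+1 => fresh w c)); last first.
  by move=> a b; rewrite distnC.
congr (_ + _ *+ 2 + _).
- rewrite (big_fresh_rank _ w n (fun r => \sum_(b < n.+1 | fresh w b) p ^+ `|r - rank w b|)).
  apply: eq_bigr => j _; rewrite (big_fresh_rank _ w n (fun r => p ^+ `|j - r|)).
  by apply: eq_bigr => j' _; rewrite distnC.
- apply: eq_bigr => c _; rewrite (big_fresh_rank _ w n (fun r => p ^+ `|rank w c - r|)).
  by apply: eq_bigr => j _; rewrite distnC.
Qed.

Lemma rank_gram_le_concentrated n w w' (rho : nat) :
  rank w' n = rank w n ->
  (forall j, (j <= rank w n)%N -> ladder (rank w n) j <= ladder (rank w n) rho) ->
  (forall c : 'I_n.+1, ~~ fresh w' c -> rank w' c = rho) ->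
  rank_gram n w <= rank_gram n w'.
Proof.
move=> rankE rho_max stale_rho; rewrite !rank_gram_split /= rankE.
set m := rank w n; set k := #|[pred c : 'I_n.+1 | ~~ fresh w c]|.
have cardE : #|[pred c : 'I_n.+1 | ~~ fresh w' c]| = k by rewrite /k !card_stale rankE.
have cross : \sum_(c < n.+1 | ~~ fresh w c) ladder m (rank w c) <= ladder m rho *+ k.
  rewrite -sumr_const; apply: ler_sum => c _; apply: rho_max.
  by apply: leq_rank; rewrite -ltnS.
have cross' : \sum_(c < n.+1 | ~~ fresh w' c) ladder m (rank w' c) = ladder m rho *+ k.
  by rewrite -cardE -sumr_const; apply: eq_bigr => c /stale_rho ->.
have inner : \sum_(a < n.+1 | ~~ fresh w a) \sum_(b < n.+1 | ~~ fresh w b)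
    p ^+ `|rank w a - rank w b| <= k%:R *+ k.
  rewrite -sumr_const; apply: ler_sum => a _; rewrite -sumr_const.
  by apply: ler_sum => b _; apply: exprn_ile1.
have inner' : \sum_(a < n.+1 | ~~ fresh w' a) \sum_(b < n.+1 | ~~ fresh w' b)
    p ^+ `|rank w' a - rank w' b| = k%:R *+ k.
  rewrite -cardE -sumr_const; apply: eq_bigr => a /stale_rho rank_a.
  by rewrite -sumr_const; apply: eq_bigr => b /stale_rho ->; rewrite rank_a distnn.
by rewrite cross' inner' lerD // lerD // lerMn2r cross orbT.
Qed.

Lemma total_age_le_window_rank n w : exists2 rho, (rho <= rank w n)%N &
  total_age n.+1 w <= total_age n.+1 (fun s => ~~ window rho (rho + (n - rank w n)) s).
Proof.
set m := rank w n; set k := (n - m)%N; have m_n : (m <= n)%N := rank_leq w n.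
have [rho rho_m rho_max] : exists2 rho, (rho <= m)%N &
    forall j, (j <= m)%N -> ladder m j <= ladder m rho.
  have [r _ r_max] := arg_maxP (fun j : 'I_m.+1 => ladder m j) (isT : predT ord0).
  exists r => [|j j_m]; first by rewrite -ltnS.
  exact: (r_max (Ordinal (j_m : (j < m.+1)%N)) isT).
exists rho => //; set w' := fun s => ~~ window rho (rho + k) s.
have rank_w' : rank w' n = m.
  have := nopen_predC w' 0 n.
  have -> : nopen (fun s => ~~ w' s) 0 n = nopen (window rho (rho + k)) 0 n.
    by apply: eq_bigr => s _; rewrite negbK.
  by rewrite nopen_window ?leq_addr ?addKn /rank; lia.
have stale_rho (c : 'I_n.+1) : ~~ fresh w' c -> rank w' c = rho.
  case: c => [[|c] //= _]; rewrite /fresh negbK => /andP[rho_c c_k].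
  by apply: rank_window_compl; rewrite (leqW rho_c).
have := rank_gram_le_concentrated rank_w' rho_max stale_rho.
have := total_age_rank_gram n w; have := total_age_rank_gram n w'.
rewrite !mulr2n; lra.
Qed.

Lemma total_age_le_window T w : exists rho k,
  [/\ (rho + k <= T)%N, (k <= nopen (fun s => ~~ w s) 0 T)%N &
      total_age T w <= total_age T (fun s => ~~ window rho (rho + k) s)].
Proof.
case: T => [|n]; first by exists 0%N, 0%N; rewrite /total_age !big_ord0.
have [rho rho_m w_le] := total_age_le_window_rank n w.
exists rho, (n - rank w n)%N; split => //; first by have := rank_leq w n; lia.
have := nopen_predC w 0 n; rewrite (@nopen_cat _ 0 n n.+1) ?leqnSn // /rank.
lia.
Qed.

End TotalAge.

Definition miss (N : nat) : rat := 1 - N%:R^-1.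

Lemma miss_ge0 N : (0 < N)%N -> 0 <= miss N.
Proof. by move=> N_gt0; rewrite subr_ge0 invf_le1 ?ler1n ?ltr0n. Qed.

Lemma miss_le1 N : miss N <= 1.
Proof. by rewrite gerDl oppr_le0 invr_ge0 ler0n. Qed.

Section ExpectedAge.
Variables (N T : nat) (sigma : 'M[bool]_(N, T)) (i : 'I_N).

(* Slots outside [0, T) are read as unblocked. *)
Definition row (s : nat) : bool :=
  if (insub s : option 'I_T) is Some t then sigma i t else true.

Lemma row_ord (t : 'I_T) : row t = sigma i t.
Proof. by rewrite /row valK. Qed.

Lemma row_lt s (s_T : (s < T)%N) : row s = sigma i (Ordinal s_T).
Proof. by rewrite /row insubT. Qed.

Definition open_in (a k : nat) (s : 'I_T) : bool := [&& (a <= s)%N, (s < k)%N & sigma i s].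

(* The age after k slots counts the a <= k such that no slot of [a, k) updates user i. *)
Lemma natr_age (R : comNzRingType) (u : {ffun 'I_T -> 'I_N}) k : (k <= T)%N ->
  (age u sigma i k)%:R = \sum_(a < k.+1) \prod_(s : 'I_T)
     (if open_in a k s && (u s == i) then 0 else 1) :> R.
Proof.
elim: k => [|k IH] k_T.
  by rewrite big_ord1 big1 // => s _; rewrite /open_in ltn0 andbF.
rewrite /=; case: insubP => [t _ t_k|]; last by rewrite k_T.
have last1 : \prod_(s : 'I_T) (if open_in k.+1 k.+1 s && (u s == i) then 0 else 1) = 1 :> R.
  by apply: big1 => s _; rewrite /open_in; case: (leqP k.+1 s).
have step (a : 'I_k.+1) :
    \prod_(s : 'I_T) (if open_in a k.+1 s && (u s == i) then 0 else 1) =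
    (\prod_(s : 'I_T) (if open_in a k s && (u s == i) then 0 else 1))
      * (if (u t == i) && sigma i t then 0 else 1) :> R.
  have a_k : (a <= k)%N by rewrite -ltnS.
  rewrite (bigD1 t) // [in RHS](bigD1 t) //= {1 3}/open_in t_k a_k ltnn ltnSn /=.
  rewrite mul1r mulrC andbC.
  congr (_ * _); apply: eq_bigr => s s_t.
  have s_k : nat_of_ord s != k by rewrite -t_k; apply: contra s_t => /eqP/val_inj ->.
  have lt_k : (s < k.+1)%N = (s < k)%N by rewrite ltnS leq_eqVlt (negbTE s_k).
  by rewrite /open_in lt_k.
rewrite big_ord_recr /= last1; under eq_bigr do rewrite step.
rewrite -mulr_suml -IH 1?ltnW //.
by case: ((u t == i) && sigma i t); rewrite ?mulr0 ?add0r // mulr1 natr1.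
Qed.

Lemma sum_open_in a t : (a <= t <= T)%N ->
  (\sum_(s : 'I_T) open_in a t s)%N = nopen row a t.
Proof.
move=> /andP[a_t t_T]; rewrite -(nopen_windowI row a_t t_T) /nopen big_mkord.
by apply: eq_bigr => s _; rewrite /open_in -row_ord andbA.
Qed.

Hypothesis N_gt0 : (0 < N)%N.

Lemma sum_slot_weight (c : bool) :
  \sum_(y : 'I_N) N%:R^-1 * (if c && (y == i) then 0 else 1) = if c then miss N else 1.
Proof.
have N_neq0 : N%:R != 0 :> rat by rewrite pnatr_eq0 -lt0n.
case: c => /=.
  rewrite (bigD1 i) //= eqxx mulr0 add0r (eq_bigr (fun _ => N%:R^-1)) => [|y /negbTE ->].
    rewrite sumr_const cardC1 card_ord -[LHS]mulr_natl -subn1 natrB //.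
    by rewrite mulrBl mulfV // mul1r.
  by rewrite mulr1.
rewrite (eq_bigr (fun _ => N%:R^-1)) => [|y _]; last by rewrite mulr1.
by rewrite sumr_const card_ord -[LHS]mulr_natl mulfV.
Qed.

Lemma exp_ageE (t : 'I_T) :
  exp_age sigma i t = \sum_(a < t.+1) miss N ^+ nopen row a t.
Proof.
rewrite /exp_age; transitivity (\sum_(a < t.+1) \sum_(u : {ffun 'I_T -> 'I_N})
    \prod_(s : 'I_T) (N%:R^-1 * (if open_in a t s && (u s == i) then 0 else 1) : rat)).
  rewrite [RHS]exchange_big /=; apply: eq_bigr => u _.
  rewrite natr_age 1?ltnW // mulr_sumr; apply: eq_bigr => a _.
  by rewrite big_split /= prodr_const card_ord.
apply: eq_bigr => a _.
pose weight s (y : 'I_N) : rat := N%:R^-1 * (if open_in a t s && (y == i) then 0 else 1).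
rewrite -(bigA_distr_bigA weight) /weight /=.
under eq_bigr do rewrite sum_slot_weight.
rewrite (eq_bigr (fun s => miss N ^+ open_in a t s)) => [|s _]; last by case: open_in.
by rewrite prodrXr sum_open_in // (ltnW (ltn_ord t)) andbT -ltnS.
Qed.

End ExpectedAge.

Lemma avg_ageE N T (sigma : 'M[bool]_(N, T)) : (0 < N)%N ->
  avg_age sigma = T%:R^-1 * (N%:R^-1 * \sum_(i < N) total_age (miss N) T (row sigma i)).
Proof.
move=> N_gt0; rewrite /avg_age -mulr_sumr exchange_big /=.
by congr (_ * (_ * _)); apply: eq_bigr => i _; apply: eq_bigr => t _; rewrite exp_ageE.
Qed.

Lemma avg_age_le N T (sigma sigma' : 'M[bool]_(N, T)) : (0 < N)%N ->
  \sum_(i < N) total_age (miss N) T (row sigma i)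
    <= \sum_(i < N) total_age (miss N) T (row sigma' i) ->
  avg_age sigma <= avg_age sigma'.
Proof.
move=> N_gt0 le_rows; rewrite !avg_ageE //.
by do 2![apply: ler_wpM2l; first by rewrite invr_ge0 ler0n].
Qed.

Lemma rows_cover N T (sigma : 'M[bool]_(N, T)) :
  (forall t, \sum_(i < N) ~~ sigma i t <= 1)%N ->
  pairwise (fun w1 w2 : nat -> bool => [forall s : 'I_T, w1 s || w2 s])
    [seq row sigma i | i <- enum 'I_N].
Proof.
move=> slot_le; rewrite pairwise_map; have := enum_uniq 'I_N; rewrite uniq_pairwise.
apply: sub_pairwise => i1 i2 /= i12; apply/forallP => s; rewrite !row_ord.
exact: (@sum_negb_le1_orb _ (fun i => sigma i s) _ _ i12 (slot_le s)).
Qed.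

Definition interval_block N T (j : 'I_N) (a b : nat) : 'M[bool]_(N, T) :=
  \matrix_(i, t) ~~ ((i == j) && window a b t).

Lemma feasible_interval_block N T (alpha : rat) K (j : 'I_N) a b :
  alpha * T%:R = K%:R -> (a <= b)%N -> (b <= T)%N -> (b - a <= K)%N ->
  feasible alpha (interval_block T j a b).
Proof.
move=> alphaK a_b b_T ba_K; rewrite /interval_block; split; last first.
  move=> t; rewrite (bigD1 j) //= big1; last by move=> i i_j; rewrite mxE (negbTE i_j).
  by rewrite mxE eqxx negbK addn0 leq_b1.
rewrite alphaK ler_nat (bigD1 j) //= [X in (_ + X)%N]big1; last first.
  by move=> i i_j; apply: big1 => t _; rewrite mxE (negbTE i_j).
under eq_bigr do rewrite mxE eqxx negbK.
rewrite addn0 -(big_mkord xpredT (fun t => window a b t : nat)).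
by rewrite -/(nopen _ 0 T) nopen_window.
Qed.

Lemma sum_total_age_interval_block N T (p : rat) (j : 'I_N) a b :
  \sum_(i < N) total_age p T (row (interval_block T j a b) i)
    = total_age p T (fun s => ~~ window a b s) + N.-1%:R * total_age p T xpredT.
Proof.
rewrite (bigD1 j) //=; congr (_ + _).
  by apply: eq_total_age => s s_T; rewrite row_lt /interval_block mxE eqxx.
rewrite (eq_bigr (fun _ => total_age p T xpredT)) => [|i i_j].
  by rewrite sumr_const cardC1 card_ord mulr_natl.
by apply: eq_total_age => s s_T; rewrite row_lt /interval_block mxE (negbTE i_j).
Qed.

Lemma interval_block_dominates N T (alpha : rat) K (sigma : 'M[bool]_(N, T)) (j : 'I_N) :
  (0 < N)%N -> alpha * T%:R = K%:R -> feasible alpha sigma ->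
  exists a b, [/\ (a <= b <= T)%N, (b - a <= K)%N &
    avg_age sigma <= avg_age (interval_block T j a b)].
Proof.
move=> N_gt0 alphaK [total_le slot_le].
have p_ge0 := miss_ge0 N_gt0; have p_le1 := miss_le1 N.
set ws := [seq row sigma i | i <- enum 'I_N].
have [rho [k [rho_k k_closed age_le]]] :=
  total_age_le_window p_ge0 p_le1 T (fun s => all (fun w => w s) ws).
exists rho, (rho + k)%N; split.
- by rewrite leq_addr.
- rewrite addKn (leq_trans k_closed) // (leq_trans (nopen_not_all ws 0 T)) //.
  rewrite big_map big_enum /= -(ler_nat rat) -alphaK (le_trans _ total_le) // ler_nat.
  apply: eq_leq; apply: eq_bigr => i _.
  by rewrite /nopen big_mkord; under eq_bigr do rewrite row_ord.
- apply: avg_age_le => //.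
  have := total_age_merge p_ge0 p_le1 (rows_cover slot_le).
  rewrite sum_total_age_interval_block size_map size_enum_ord big_map big_enum /=.
  rewrite -[N in N%:R](prednK N_gt0) -natr1; lra.
Qed.

Theorem theorem1 (N T : nat) (alpha : rat)
  (hN : (2 <= N)%N) (hT : (0 < T)%N)
  (ha0 : 0 < alpha) (ha1 : alpha < 1)
  (haT : exists K : nat, alpha * T%:R = K%:R) :
  forall j : 'I_N,
  exists sigma : 'M[bool]_(N, T),
    [/\ feasible alpha sigma,
        (forall sigma' : 'M[bool]_(N, T), feasible alpha sigma' ->
           avg_age sigma' <= avg_age sigma)
      & exists a b : nat, forall (i : 'I_N) (t : 'I_T),
          ~~ sigma i t <-> (i = j /\ (a <= t < b)%N)].
Proof.
move=> j; have [K alphaK] := haT; have N_gt0 : (0 < N)%N := ltnW hN.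
pose admissible (x : 'I_T.+1 * 'I_T.+1) := ((x.1 <= x.2) && (x.2 - x.1 <= K))%N.
have adm0 : admissible (ord0, ord0) by rewrite /admissible /= subnn.
have [[a b] /andP[/= a_b ba_K] ab_max] :=
  arg_maxP (fun x : 'I_T.+1 * 'I_T.+1 => avg_age (interval_block T j x.1 x.2)) adm0.
exists (interval_block T j a b); split.
- by apply: feasible_interval_block alphaK a_b _ ba_K; rewrite -ltnS.
- move=> sigma' /(interval_block_dominates j N_gt0 alphaK).
  move=> [a' [b' [/andP[a_b' b_T] ba_K' le']]]; apply: (le_trans le').
  have a_T : (a' < T.+1)%N by rewrite ltnS (leq_trans a_b').
  apply: (ab_max (Ordinal a_T, Ordinal (b_T : (b' < T.+1)%N))).
  by rewrite /admissible /= a_b'.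
- exists a, b => i t; rewrite /interval_block mxE negbK.
  by split=> [/andP[/eqP -> ab_t] | [-> ab_t]] //; rewrite eqxx.
Qed.
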